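(* Assume the standing assumptions (P1)–(P6) described in the context. Let $(f_0,t_0)\in\mathrm{Dom}\,\mathcal P$ and suppose the Volterra problem VP$(f_0,t_0)$ has two solutions $\varphi\in C([t_0,T),F)$ and $\varphi'\in C([t_0,T'),F)$. Then $\varphi(t)=\varphi'(t)$ for all $t\in[t_0,\min(T,T'))$.
   Context: All Banach spaces are over a common field ($\mathbb R$ or $\mathbb C$). For Banach spaces $X,Y$, $X\hookrightarrow Y$ means that $X$ is a dense linear subspace of $Y$ and the inclusion is continuous. Standing assumptions: (P1) $F_+,F,F_-$ are Banach spaces with norms $\|\cdot\|_+,\|\cdot\|,\|\cdot\|_-$ and $F_+\hookrightarrow F\hookrightarrow F_-$; $B(f_0,r):=\{f\in F:\|f-f_0\|<r\}$. (P2) $\mathcal A:F_+\to F_-$ is linear and on $F_+$ the norm $\|\cdot\|_+$ is equivalent to $f\mapsto\|f\|_-+\|\mathcal Af\|_-$. (P3) $\mathcal A$, viewed as a densely defined operator in $F_-$ with domain $F_+$, generates a strongly continuous semigroup $(e^{t\mathcal A})_{t\ge0}$ on $F_-$. (P4) $e^{t\mathcal A}(F)\subset F$ for $t\ge0$, $(f,t)\mapsto e^{t\mathcal A}f$ is continuous from $F\times[0,\infty)$ to $F$, and $u\in C([0,\infty),(0,\infty))$ satisfies $\|e^{t\mathcal A}f\|\le u(t)\|f\|$. (P5) $e^{t\mathcal A}(F_-)\subset F$ for $t>0$, $(f,t)\mapsto e^{t\mathcal A}f$ is continuous from $F_-\times(0,\infty)$ to $F$, and $u_-\in C((0,\infty),(0,\infty))$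 satisfies $\|e^{t\mathcal A}f\|\le u_-(t)\|f\|_-$ for $t>0$, $f\in F_-$, with $u_-(t)=O(t^{-(1-\sigma)})$ as $t\to0^+$ for some $\sigma\in(0,1]$. (P6) $\mathcal P:\mathrm{Dom}\,\mathcal P\subset F\times\mathbb R\to F_-$; the domain is semi-open (for each $(f_0,t_0)\in\mathrm{Dom}\,\mathcal P$ there are $\delta,r\in(0,+\infty]$ with $B(f_0,r)\times[t_0,t_0+\delta)\subset\mathrm{Dom}\,\mathcal P$), and for every closed bounded $\mathcal C\subset F\times\mathbb R$ with $\mathcal C\subset\mathrm{Dom}\,\mathcal P$ there are $L,M\ge0$ with $\|\mathcal P(f,t)-\mathcal P(f',t')\|_-\le L\|f-f'\|+M|t-t'|$ on $\mathcal C$. A solution of the Volterra problem VP$(f_0,t_0)$ on $[t_0,T)$ ($T\in(t_0,+\infty]$) is a $\varphi\in C([t_0,T),F)$ whose graph $\{(\varphi(t),t)\}$ lies in $\mathrm{Dom}\,\mathcal P$ and with $\varphi(t)=e^{(t-t_0)\mathcal A}f_0+\int_{t_0}^te^{(t-s)\mathcal A}\mathcal P(\varphi(s),s)\,ds$ for all $t\in[t_0,T)$. *)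

(* Banach spaces = CompleteNormedModule R_AbsRing. *)
From Stdlib Require Import Reals.
From Coquelicot Require Export Coquelicot.
Open Scope R_scope.

Section Defs.
Context {K : AbsRing}.

Definition dense_cont_embedding {X Y : NormedModule K} (i : X -> Y) : Prop :=
  is_linear i /\ (forall x y, i x = i y -> x = y) /\
  (forall (y : Y) (eps : R), 0 < eps -> exists x : X, norm (minus (i x) y) < eps).
End Defs.

(* linear (not necessarily bounded) map *)
Definition lin_map {X Y : NormedModule R_AbsRing} (A : X -> Y) : Prop :=
  (forall x y, A (plus x y) = plus (A x) (A y)) /\
  (forall (k : R) x, A (scal k x) = scal k (A x)).

Definition C0_semigroup {X : NormedModule R_AbsRing} (S : R -> X -> X) : Prop :=
  (forall t, 0 <= t -> is_linear (S t)) /\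
  (forall x, S 0 x = x) /\
  (forall s t x, 0 <= s -> 0 <= t -> S (s + t) x = S s (S t x)) /\
  (forall x t, 0 <= t ->
     filterlim (fun s => S s x) (within (fun s => 0 <= s) (locally t)) (locally (S t x))).

(* the generator of S is the operator A with domain j(D), j : D -> X *)
Definition generates {D X : NormedModule R_AbsRing} (j : D -> X) (A : D -> X)
  (S : R -> X -> X) : Prop :=
  (forall y : X, (exists z : X,
       filterlim (fun h => scal (/ h) (minus (S h y) y)) (at_right 0) (locally z))
     <-> exists x : D, y = j x) /\
  (forall x : D,
     filterlim (fun h => scal (/ h) (minus (S h (j x)) (j x))) (at_right 0) (locally (A x))).

(* standing assumptions (P1)-(P6); i1 : F+ ↪ F, i2 : F ↪ F-,
   S t = e^{tA} on F-, SF t = e^{tA} restricted to F (t >= 0),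
   SFm t = e^{tA} : F- -> F (t > 0) *)
Definition standing_assumptions
  {Fp F Fm : CompleteNormedModule R_AbsRing}
  (i1 : Fp -> F) (i2 : F -> Fm) (A : Fp -> Fm) (S : R -> Fm -> Fm)
  (SF : R -> F -> F) (u : R -> R) (SFm : R -> Fm -> F) (um : R -> R) (sigma : R)
  (DomP : F -> R -> Prop) (P : F -> R -> Fm) : Prop :=
  dense_cont_embedding i1 /\ dense_cont_embedding i2 /\
  lin_map A /\
  (exists c C : R, 0 < c /\ 0 < C /\ forall f : Fp,
     c * norm f <= norm (i2 (i1 f)) + norm (A f) /\
     norm (i2 (i1 f)) + norm (A f) <= C * norm f) /\
  C0_semigroup S /\ generates (fun f => i2 (i1 f)) A S /\
  (forall t (f : F), 0 <= t -> i2 (SF t f) = S t (i2 f)) /\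
  (forall (f : F) t, 0 <= t ->
     filterlim (fun p : F * R => SF (snd p) (fst p))
       (within (fun p : F * R => 0 <= snd p) (locally (f, t))) (locally (SF t f))) /\
  (forall t, 0 <= t -> 0 < u t /\
     filterlim u (within (fun s => 0 <= s) (locally t)) (locally (u t))) /\
  (forall t (f : F), 0 <= t -> norm (SF t f) <= u t * norm f) /\
  (forall t (f : Fm), 0 < t -> i2 (SFm t f) = S t f) /\
  (forall (f : Fm) t, 0 < t ->
     filterlim (fun p : Fm * R => SFm (snd p) (fst p)) (locally (f, t)) (locally (SFm t f))) /\
  (forall t, 0 < t -> 0 < um t /\ continuous um t) /\
  (forall t (f : Fm), 0 < t -> norm (SFm t f) <= um t * norm f) /\
  0 < sigma <= 1 /\
  (exists C delta : R, 0 < delta /\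
     forall t, 0 < t < delta -> um t <= C * Rpower t (sigma - 1)) /\
  (* P6 : semi-open domain *)
  (forall f0 t0, DomP f0 t0 -> exists delta r : R, 0 < delta /\ 0 < r /\
     forall f t, norm (minus f f0) < r -> t0 <= t < t0 + delta -> DomP f t) /\
  (forall Cs : F * R -> Prop,
     closed Cs ->
     (exists B : R, forall p, Cs p -> norm (fst p) + Rabs (snd p) <= B) ->
     (forall p, Cs p -> DomP (fst p) (snd p)) ->
     exists L M : R, 0 <= L /\ 0 <= M /\ forall f t f' t', Cs (f, t) -> Cs (f', t') ->
       norm (minus (P f t) (P f' t')) <= L * norm (minus f f') + M * Rabs (t - t')).

(* phi is a solution of VP(f0,t0) on [t0,T) ; the integral is the Riemann
   integral in F- of the (F- -continuous) integrand, and F is viewed inside F- via i2 *)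
Definition VP_solution
  {F Fm : CompleteNormedModule R_AbsRing} (i2 : F -> Fm) (S : R -> Fm -> Fm)
  (DomP : F -> R -> Prop) (P : F -> R -> Fm)
  (f0 : F) (t0 : R) (T : Rbar) (phi : R -> F) : Prop :=
  Rbar_lt t0 T /\
  (forall t, t0 <= t -> Rbar_lt t T ->
     filterlim phi (within (fun s => t0 <= s /\ Rbar_lt s T) (locally t)) (locally (phi t))) /\
  (forall t, t0 <= t -> Rbar_lt t T -> DomP (phi t) t) /\
  (forall t, t0 <= t -> Rbar_lt t T ->
     exists v : Fm, is_RInt (fun s => S (t - s) (P (phi s) s)) t0 t v /\
       i2 (phi t) = plus (S (t - t0) (i2 f0)) v).

From Stdlib Require Import Reals Lra Classical.
From Coquelicot Require Import Coquelicot.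
Open Scope R_scope.

(* Fix [t1] below both existence times and let [d = phi - phi']. Read in F_-, [d] satisfies
   [d t = int_t0^t e^((t-s)A) (P (phi s) s - P (phi' s) s) ds]. The two graphs over [[t0, t1]]
   form a closed bounded subset of Dom P, on which P is L-Lipschitz, so the integrand lies in F
   with norm at most [u_-(t-s) L |d s| <= K L (t-s)^(sigma-1) |d s|]. Hence if [d = 0] on
   [[t0, tau]] and [|d| <= beta] on [[tau, t]], then [|d t| <= (K L / sigma) beta (t-tau)^sigma].
   Over a short enough step this halves every bound, so [d] vanishes step by step on [[t0, t1]]. *)

Lemma minus_eq_zero_eq {G : AbelianGroup} (x y : G) : minus x y = zero -> x = y.
Proof.
  intros Hxy. apply (plus_reg_r (opp y)).
  change (minus x y = minus y y). now rewrite Hxy, minus_eq_zero.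
Qed.

Lemma norm_minus_le_0_eq {K : AbsRing} {V : NormedModule K} (x y : V) :
  norm (minus x y) <= 0 -> x = y.
Proof.
  intros Hn. apply minus_eq_zero_eq, norm_eq_zero.
  pose proof (norm_ge_0 (minus x y)). lra.
Qed.

Lemma minus_plus_l {G : AbelianGroup} (x y z : G) :
  minus (plus x y) (plus x z) = minus y z.
Proof.
  unfold minus. rewrite opp_plus, (plus_comm x y), <- plus_assoc. f_equal.
  rewrite plus_assoc. etransitivity; [|apply plus_zero_l]. f_equal. apply plus_opp_r.
Qed.

Lemma linear_minus {U V : NormedModule R_AbsRing} (l : U -> V) x y :
  is_linear l -> l (minus x y) = minus (l x) (l y).
Proof. intros Hl. unfold minus. now rewrite (linear_plus l Hl), (linear_opp l y Hl). Qed.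

Lemma Riemann_sum_linear {U V : NormedModule R_AbsRing} (l : U -> V) (f : R -> U) ptd :
  is_linear l -> Riemann_sum (fun x => l (f x)) ptd = l (Riemann_sum f ptd).
Proof.
  intros Hl. induction ptd using SF_cons_ind.
  - symmetry. apply (linear_zero l Hl).
  - now rewrite !Riemann_sum_cons, IHptd, (linear_plus l Hl), (linear_scal l Hl).
Qed.

Lemma is_RInt_linear {U V : NormedModule R_AbsRing} (l : U -> V) (f : R -> U) a b v :
  is_linear l -> is_RInt f a b v -> is_RInt (fun x => l (f x)) a b (l v).
Proof.
  intros Hl Hf. eapply filterlim_ext.
  2: { eapply filterlim_comp; [exact Hf | apply (linear_cont l v Hl)]. }
  intros ptd. simpl. now rewrite (linear_scal l Hl), (Riemann_sum_linear l f).
Qed.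

Lemma closed_or {T : UniformSpace} (D E : T -> Prop) :
  closed D -> closed E -> closed (fun x => D x \/ E x).
Proof.
  intros HD HE x Hx. apply NNPP. intros HDE. apply Hx.
  assert (HnD : locally x (fun y => ~ D y)) by (apply NNPP; intros H; apply HD in H; tauto).
  assert (HnE : locally x (fun y => ~ E y)) by (apply NNPP; intros H; apply HE in H; tauto).
  generalize (filter_and _ _ HnD HnE). apply filter_imp. tauto.
Qed.

Lemma closed_graph {V : NormedModule R_AbsRing} (p : R -> V) :
  (forall t, continuous p t) -> closed (fun z : V * R => fst z = p (snd z)).
Proof.
  intros Hp. apply (closed_ext (fun z : V * R => norm (minus (fst z) (p (snd z))) = 0)).
  - intros z. split; intros Hz.
    + apply norm_minus_le_0_eq. lra.
    + rewrite Hz, minus_eq_zero. apply norm_zero.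
  - apply (closed_comp (fun z : V * R => norm (minus (fst z) (p (snd z)))) (fun r => r = 0));
      [|apply closed_eq].
    intros [f t]. apply (continuous_comp (fun z : V * R => minus (fst z) (p (snd z))) norm);
      [|apply filterlim_norm].
    apply continuous_minus; [apply continuous_fst|].
    apply (continuous_comp snd p); [apply continuous_snd | apply Hp].
Qed.

Definition clamp (a b x : R) : R := Rmin b (Rmax a x).

Lemma clamp_in a b x : a <= b -> a <= clamp a b x <= b.
Proof. unfold clamp, Rmin, Rmax. repeat destruct Rle_dec; lra. Qed.

Lemma clamp_id a b x : a <= x <= b -> clamp a b x = x.
Proof. unfold clamp, Rmin, Rmax. repeat destruct Rle_dec; lra. Qed.

Lemma clamp_lipschitz a b x y : a <= b -> Rabs (clamp a b x - clamp a b y) <= Rabs (x - y).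
Proof. unfold clamp, Rmin, Rmax, Rabs. repeat destruct Rle_dec; repeat destruct Rcase_abs; lra. Qed.

Lemma continuous_clamp a b x : a <= b -> continuous (clamp a b) x.
Proof.
  intros Hab. apply filterlim_locally. intros eps. exists eps. intros y Hy.
  change (Rabs (clamp a b y - clamp a b x) < eps).
  pose proof (clamp_lipschitz a b y x Hab). change (Rabs (y - x) < eps) in Hy. lra.
Qed.

Lemma continuous_comp_clamp {V : UniformSpace} (f : R -> V) a b (D : R -> Prop) :
  a <= b -> (forall s, a <= s <= b -> D s) ->
  (forall s, a <= s <= b -> filterlim f (within D (locally s)) (locally (f s))) ->
  forall x, continuous (fun x => f (clamp a b x)) x.
Proof.
  intros Hab HD Hf x Q HQ.
  destruct (Hf _ (clamp_in a b x Hab) Q HQ) as [eps Heps].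
  exists eps. intros y Hy. apply Heps; [|apply HD, clamp_in, Hab].
  change (Rabs (clamp a b y - clamp a b x) < eps).
  pose proof (clamp_lipschitz a b y x Hab). change (Rabs (y - x) < eps) in Hy. lra.
Qed.

Lemma continuous_norm_comp {V : NormedModule R_AbsRing} (f : R -> V) s :
  continuous f s -> continuous (fun x => norm (f x)) s.
Proof. intros Hf. apply (continuous_comp f norm); [exact Hf | apply filterlim_norm]. Qed.

Lemma continuous_of_lipschitz_bound {V W : NormedModule R_AbsRing} (h : R -> W) (p : R -> V)
  (c : R -> R) s L M :
  0 <= L -> 0 <= M ->
  (forall x, norm (minus (h x) (h s)) <= L * norm (minus (p x) (p s)) + M * Rabs (c x - c s)) ->
  continuous p s -> continuous c s -> continuous h s.
Proof.
  intros HL HM Hb Hp Hc. apply filterlim_locally_ball_norm. intros eps.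
  assert (He : 0 < eps / (L + M + 1)) by (apply Rdiv_lt_0_compat; [apply cond_pos | lra]).
  set (e := mkposreal _ He).
  generalize (filter_and _ _ (proj1 (filterlim_locally_ball_norm _ _) Hp e)
                             (proj1 (filterlim_locally_ball_norm _ _) Hc e)).
  apply filter_imp. intros x [Hpx Hcx].
  change (norm (minus (p x) (p s)) < e) in Hpx. change (Rabs (c x - c s) < e) in Hcx.
  change (norm (minus (h x) (h s)) < eps).
  assert (Hsum : L * norm (minus (p x) (p s)) + M * Rabs (c x - c s) <= (L + M) * e).
  { rewrite Rmult_plus_distr_r.
    apply Rplus_le_compat; apply Rmult_le_compat_l; lra. }
  assert (Hlt : (L + M) * e < eps)
    by (simpl; apply (Rmult_lt_reg_r (L + M + 1)); [lra |];
        field_simplify; pose proof (cond_pos eps); lra).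
  pose proof (Hb x). lra.
Qed.

Lemma continuous_bounded_on_interval (f : R -> R) a b :
  a <= b -> (forall c, a <= c <= b -> continuous f c) -> exists M, forall c, a <= c <= b -> f c <= M.
Proof.
  intros Hab Hf. destruct (continuity_ab_maj f a b Hab) as [x [Hx _]].
  - intros c Hc. apply continuity_pt_filterlim, Hf, Hc.
  - exists (f x). exact Hx.
Qed.

Lemma norm_le_of_orbit_bound {V : NormedModule R_AbsRing} (SF : R -> V -> V) (d : R -> V) tau t N :
  tau < t -> continuous d t ->
  filterlim (fun q : V * R => SF (snd q) (fst q))
    (within (fun q : V * R => 0 <= snd q) (locally (d t, 0))) (locally (d t)) ->
  (forall a, tau <= a < t -> norm (SF (t - a) (d a)) <= N) -> norm (d t) <= N.
Proof.
  intros Ht Hd HSF Hb.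
  apply (closed_filterlim_loc (F := at_left t) (fun a => SF (t - a) (d a)) (fun y => norm y <= N)).
  - eapply (filterlim_comp _ _ _ (fun a => (d a, t - a)) (fun q : V * R => SF (snd q) (fst q)));
      [|exact HSF].
    intros Q [eps HQ]. destruct (Hd _ (locally_ball (d t) eps)) as [del Hdel].
    assert (Hm : 0 < Rmin eps del) by (apply Rmin_pos; apply cond_pos).
    exists (mkposreal _ Hm). intros a Ha Hat. apply HQ; simpl; [split|lra].
    + apply Hdel. eapply ball_le; [apply Rmin_r|exact Ha].
    + change (Rabs (t - a - 0) < eps). change (Rabs (a - t) < Rmin eps del) in Ha.
      pose proof (Rmin_l eps del). unfold Rabs in *. repeat destruct Rcase_abs; lra.
  - assert (Htau : 0 < t - tau) by lra. exists (mkposreal _ Htau). intros a Ha Hat. apply Hb.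
    change (Rabs (a - t) < t - tau) in Ha. unfold Rabs in Ha. destruct Rcase_abs; lra.
  - apply (closed_comp norm (fun r => r <= N)); [intros; apply filterlim_norm | apply closed_le].
Qed.

Lemma Rpower_pos x y : 0 < Rpower x y.
Proof. apply exp_pos. Qed.

Lemma Rpower_le_nonpos_exponent x y e : e <= 0 -> 0 < x <= y -> Rpower y e <= Rpower x e.
Proof.
  intros He Hxy. rewrite <- (Ropp_involutive e), (Rpower_Ropp x), (Rpower_Ropp y).
  apply Rinv_le_contravar; [apply Rpower_pos | apply Rle_Rpower_l; lra].
Qed.

Lemma derivable_pt_lim_Rpower_sub t s e : s < t ->
  derivable_pt_lim (fun x => Rpower (t - x) e) s (- (e * Rpower (t - s) (e - 1))).
Proof.
  intros Hs. replace (- (e * Rpower (t - s) (e - 1))) with (e * Rpower (t - s) (e - 1) * (-1)) by ring.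
  apply (derivable_pt_lim_comp (fun x => t - x) (fun y => Rpower y e)).
  - replace (-1) with (0 - 1) by ring.
    apply derivable_pt_lim_minus; [apply derivable_pt_lim_const | apply derivable_pt_lim_id].
  - apply derivable_pt_lim_power. lra.
Qed.

Lemma is_RInt_Rpower_sub t a b sigma c : a <= b -> b < t -> 0 < sigma ->
  is_RInt (fun s => c * Rpower (t - s) (sigma - 1)) a b
    (c / sigma * (Rpower (t - a) sigma - Rpower (t - b) sigma)).
Proof.
  intros Hab Hbt Hsig.
  replace (c / sigma * (Rpower (t - a) sigma - Rpower (t - b) sigma)) with
    (minus (- (c / sigma) * Rpower (t - b) sigma) (- (c / sigma) * Rpower (t - a) sigma))
    by (unfold minus, plus, opp; simpl; ring).
  apply (is_RInt_derive (fun s => - (c / sigma) * Rpower (t - s) sigma)); intros x Hx;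
    rewrite Rmin_left, Rmax_right in Hx by lra.
  - apply is_derive_Reals.
    replace (c * Rpower (t - x) (sigma - 1))
      with (- (c / sigma) * - (sigma * Rpower (t - x) (sigma - 1))) by (field; lra).
    apply derivable_pt_lim_scal, derivable_pt_lim_Rpower_sub. lra.
  - apply (continuous_scal_r c (fun x => Rpower (t - x) (sigma - 1))).
    apply (ex_derive_continuous (K := R_AbsRing) (V := R_NormedModule)).
    eexists. apply is_derive_Reals, derivable_pt_lim_Rpower_sub. lra.
Qed.

Lemma singular_bound_on_interval (um : R -> R) sigma C delta r0 :
  sigma <= 1 -> 0 < delta -> 0 <= r0 ->
  (forall r, 0 < r -> continuous um r) ->
  (forall r, 0 < r < delta -> um r <= C * Rpower r (sigma - 1)) ->
  exists K, 0 <= K /\ forall r, 0 < r <= r0 -> um r <= K * Rpower r (sigma - 1).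
Proof.
  intros Hsig Hdelta Hr0 Hcont HC.
  set (D := r0 + delta).
  destruct (continuous_bounded_on_interval um (delta / 2) D) as [Mu HMu];
    [unfold D; lra | intros r Hr; apply Hcont; lra |].
  assert (HD : 0 < Rpower D (sigma - 1)) by apply Rpower_pos.
  exists (Rmax (Rmax C 0) (Rmax Mu 0 / Rpower D (sigma - 1))).
  split; [eapply Rle_trans; [apply Rmax_r | apply Rmax_l] |].
  intros r Hr. pose proof (Rpower_pos r (sigma - 1)).
  destruct (Rlt_dec r delta) as [Hrd | Hrd].
  - eapply Rle_trans; [apply HC; lra |].
    apply Rmult_le_compat_r; [lra |].
    eapply Rle_trans; [apply Rmax_l | apply Rmax_l].
  - assert (Hpow : Rpower D (sigma - 1) <= Rpower r (sigma - 1))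
      by (apply Rpower_le_nonpos_exponent; unfold D; lra).
    apply (Rle_trans _ (Rmax Mu 0 / Rpower D (sigma - 1) * Rpower r (sigma - 1))).
    + apply (Rle_trans _ (Rmax Mu 0)); [eapply Rle_trans; [apply HMu; unfold D; lra | apply Rmax_l] |].
      apply (Rle_trans _ (Rmax Mu 0 / Rpower D (sigma - 1) * Rpower D (sigma - 1)));
        [right; field; lra |].
      apply Rmult_le_compat_l; [apply Rdiv_le_0_compat; [apply Rmax_r | lra] | exact Hpow].
    + apply Rmult_le_compat_r; [lra | apply Rmax_r].
Qed.

Lemma le_0_of_le_div_pow2 x B : (forall k : nat, x <= B / 2 ^ k) -> x <= 0.
Proof.
  intros Hk. apply Rnot_lt_le. intros Hx.
  assert (HB : 0 <= B) by (specialize (Hk O); simpl in Hk; lra).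
  assert (Hy : 0 < x / (B + 1)) by (apply Rdiv_lt_0_compat; lra).
  destruct (pow_lt_1_zero (/ 2) ltac:(rewrite Rabs_pos_eq; lra) _ Hy) as [N HN].
  specialize (HN N (le_n N)). specialize (Hk N).
  rewrite Rabs_pos_eq, pow_inv in HN by (try apply pow_le; lra).
  assert (B / 2 ^ N <= B * (x / (B + 1))) by (apply Rmult_le_compat_l; lra).
  assert (B * (x / (B + 1)) < x) by
    (replace (B * (x / (B + 1))) with (x - x / (B + 1)) by (field; lra); lra).
  lra.
Qed.

Section SingularGronwall.

Variables (n : R -> R) (t0 t1 c sigma B : R).
Hypothesis sigma_pos : 0 < sigma.
Hypothesis c_ge0 : 0 <= c.
Hypothesis n_bounds : forall s, t0 <= s <= t1 -> 0 <= n s <= B.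
Hypothesis n_t0 : n t0 = 0.
Hypothesis n_estimate : forall tau t beta,
  t0 <= tau < t -> t <= t1 -> 0 <= beta ->
  (forall s, t0 <= s <= tau -> n s = 0) -> (forall s, tau <= s <= t -> n s <= beta) ->
  n t <= c * beta * Rpower (t - tau) sigma.

(* [c * h ^ sigma = c / (2 (c + 1)) <= 1/2], so one step of length [h] halves any bound. *)
Let h := Rpower (/ (2 * (c + 1))) (/ sigma).

Lemma gronwall_step_pos : 0 < h.
Proof. apply Rpower_pos. Qed.

Lemma estimate_halves_on_step tau t beta :
  t0 <= tau < t -> t <= Rmin (tau + h) t1 -> 0 <= beta ->
  (forall s, t0 <= s <= tau -> n s = 0) -> (forall s, tau <= s <= t -> n s <= beta) ->
  n t <= beta / 2.
Proof.
  intros Htau Ht Hbeta Hzero Hbound.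
  pose proof (Rmin_l (tau + h) t1). pose proof (Rmin_r (tau + h) t1).
  eapply Rle_trans; [apply (n_estimate tau t beta); auto; lra |].
  assert (Hpow : Rpower (t - tau) sigma <= / (2 * (c + 1))).
  { replace (/ (2 * (c + 1))) with (Rpower h sigma).
    - apply Rle_Rpower_l; lra.
    - unfold h. rewrite Rpower_mult, Rinv_l, Rpower_1 by (try apply Rinv_0_lt_compat; lra). reflexivity. }
  apply (Rle_trans _ (c * beta * / (2 * (c + 1)))).
  - apply Rmult_le_compat_l; [apply Rmult_le_pos |]; lra.
  - apply (Rmult_le_reg_r (2 * (c + 1))); [lra |].
    field_simplify; [nra | lra].
Qed.

Lemma singular_gronwall_step tau : t0 <= tau <= t1 ->
  (forall s, t0 <= s <= tau -> n s = 0) -> forall s, t0 <= s <= Rmin (tau + h) t1 -> n s = 0.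
Proof.
  intros Htau Hzero s Hs.
  pose proof (Rmin_l (tau + h) t1). pose proof (Rmin_r (tau + h) t1).
  destruct (Rle_lt_dec s tau) as [Hst | Hst]; [apply Hzero; lra |].
  assert (Hhalving : forall k, forall s', tau <= s' <= Rmin (tau + h) t1 -> n s' <= B / 2 ^ k).
  { induction k as [|k IHk]; intros s' Hs'.
    - simpl. rewrite Rdiv_1_r. apply n_bounds. lra.
    - destruct (Rle_lt_dec s' tau) as [Hs'tau | Hs'tau].
      + replace s' with tau by lra. rewrite Hzero by lra.
        apply Rdiv_le_0_compat; [| apply pow_lt]; pose proof (n_bounds t0); lra.
      + simpl. replace (B / (2 * 2 ^ k)) with (B / 2 ^ k / 2) by (field; apply pow_nonzero; lra).
        apply (estimate_halves_on_step tau s'); try lra; auto.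
        * apply Rdiv_le_0_compat; [| apply pow_lt]; pose proof (n_bounds t0); lra.
        * intros s'' Hs''. apply IHk. lra. }
  apply Rle_antisym; [apply (le_0_of_le_div_pow2 _ B); intros k; apply Hhalving; lra |].
  apply n_bounds. lra.
Qed.

Lemma singular_gronwall_zero : forall s, t0 <= s <= t1 -> n s = 0.
Proof.
  intros s Hs.
  assert (Hsteps : forall k : nat, forall s', t0 <= s' <= Rmin (t0 + INR k * h) t1 -> n s' = 0).
  { pose proof gronwall_step_pos. induction k as [|k IHk]; intros s' Hs'.
    - simpl in Hs'. rewrite Rmult_0_l, Rplus_0_r in Hs'. pose proof (Rmin_l t0 t1).
      replace s' with t0 by lra. exact n_t0.
    - apply (singular_gronwall_step (Rmin (t0 + INR k * h) t1)).
      + pose proof (pos_INR k). split; [apply Rmin_glb; nra | apply Rmin_r].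
      + exact IHk.
      + rewrite S_INR in Hs'. split; [lra |].
        unfold Rmin in *. repeat destruct Rle_dec; nra. }
  destruct (nfloor_ex ((t1 - t0) / h)) as [k [_ Hk]];
    [apply Rdiv_le_0_compat; [lra | apply gronwall_step_pos] |].
  apply (Hsteps (S k)). rewrite S_INR, Rmin_right; [lra |].
  apply (Rmult_lt_compat_r h) in Hk; [| apply gronwall_step_pos].
  unfold Rdiv in Hk.
  rewrite Rmult_assoc, Rinv_l, Rmult_1_r in Hk by apply Rgt_not_eq, gronwall_step_pos. lra.
Qed.

End SingularGronwall.

Section VolterraDifference.

Context {F Fm : CompleteNormedModule R_AbsRing}.
Variables (i2 : F -> Fm) (S : R -> Fm -> Fm) (SF : R -> F -> F) (SFm : R -> Fm -> F) (um : R -> R).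
Hypothesis i2_linear : is_linear i2.
Hypothesis i2_inj : forall x y, i2 x = i2 y -> x = y.
Hypothesis S_linear : forall t, 0 <= t -> is_linear (S t).
Hypothesis S_0 : forall x, S 0 x = x.
Hypothesis S_add : forall s t x, 0 <= s -> 0 <= t -> S (s + t) x = S s (S t x).
Hypothesis SF_S : forall t f, 0 <= t -> i2 (SF t f) = S t (i2 f).
Hypothesis SF_cont0 : forall f, filterlim (fun q : F * R => SF (snd q) (fst q))
  (within (fun q : F * R => 0 <= snd q) (locally (f, 0))) (locally (SF 0 f)).
Hypothesis SFm_S : forall t f, 0 < t -> i2 (SFm t f) = S t f.
Hypothesis SFm_cont : forall f t, 0 < t ->
  filterlim (fun q : Fm * R => SFm (snd q) (fst q)) (locally (f, t)) (locally (SFm t f)).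
Hypothesis SFm_bound : forall t f, 0 < t -> norm (SFm t f) <= um t * norm f.

Variables (sigma K L : R) (f0 : F) (t0 t1 : R) (phi phi' : R -> F) (p p' g : R -> Fm).
Hypothesis t0_le_t1 : t0 <= t1.
Hypothesis sigma_pos : 0 < sigma.
Hypothesis K_ge0 : 0 <= K.
Hypothesis L_ge0 : 0 <= L.
Hypothesis um_K : forall r, 0 < r <= t1 - t0 -> um r <= K * Rpower r (sigma - 1).
Hypothesis phi_cont : forall s, t0 <= s <= t1 -> continuous phi s.
Hypothesis phi'_cont : forall s, t0 <= s <= t1 -> continuous phi' s.
Hypothesis phi_VP : forall a, t0 <= a <= t1 -> exists v,
  is_RInt (fun s => S (a - s) (p s)) t0 a v /\ i2 (phi a) = plus (S (a - t0) (i2 f0)) v.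
Hypothesis phi'_VP : forall a, t0 <= a <= t1 -> exists v,
  is_RInt (fun s => S (a - s) (p' s)) t0 a v /\ i2 (phi' a) = plus (S (a - t0) (i2 f0)) v.
Hypothesis g_cont : forall s, t0 <= s <= t1 -> continuous g s.
Hypothesis g_eq : forall s, t0 <= s <= t1 -> g s = minus (p s) (p' s).
Hypothesis g_lipschitz : forall s, t0 <= s <= t1 -> norm (g s) <= L * norm (minus (phi s) (phi' s)).

Let d s := minus (phi s) (phi' s).

Lemma SF_0 f : SF 0 f = f.
Proof. apply i2_inj. rewrite SF_S by lra. apply S_0. Qed.

Lemma difference_mild_formula a : t0 <= a <= t1 ->
  exists w, is_RInt (fun s => S (a - s) (g s)) t0 a w /\ i2 (d a) = w.
Proof.
  intros Ha. destruct (phi_VP a Ha) as [v [Hv Ev]]. destruct (phi'_VP a Ha) as [v' [Hv' Ev']].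
  exists (minus v v'). split.
  - eapply is_RInt_ext; [| exact (is_RInt_minus _ _ _ _ _ _ Hv Hv')].
    intros s Hs. rewrite Rmin_left, Rmax_right in Hs by lra.
    rewrite g_eq by lra. symmetry. apply (linear_minus (S (a - s))), S_linear. lra.
  - unfold d. rewrite (linear_minus i2), Ev, Ev' by exact i2_linear.
    exact (minus_plus_l _ _ _).
Qed.

Lemma difference_at_t0 : phi t0 = phi' t0.
Proof.
  destruct (phi_VP t0) as [v [Hv Ev]]; [lra |]. destruct (phi'_VP t0) as [v' [Hv' Ev']]; [lra |].
  rewrite <- (is_RInt_unique _ _ _ _ Hv), RInt_point in Ev.
  rewrite <- (is_RInt_unique _ _ _ _ Hv'), RInt_point in Ev'.
  apply i2_inj. congruence.
Qed.

Lemma integrand_continuous t s : t0 <= s < t -> t <= t1 ->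
  continuous (fun s => SFm (t - s) (g s)) s.
Proof.
  intros Hs Ht. apply (continuous_comp_2 g (fun x => t - x) (fun x r => SFm r x)).
  - apply g_cont. lra.
  - apply (continuous_minus (fun _ => t) (fun x => x)); [apply continuous_const | apply continuous_id].
  - apply SFm_cont. simpl. lra.
Qed.

Lemma ex_RInt_integrand t a b : t0 <= a <= b -> b < t -> t <= t1 ->
  ex_RInt (fun s => SFm (t - s) (g s)) a b.
Proof.
  intros Hab Hb Ht. apply ex_RInt_continuous. intros s Hs.
  rewrite Rmin_left, Rmax_right in Hs by lra. apply integrand_continuous; lra.
Qed.

(* Only for [a < t]: [um] may blow up at [0], so the integral in F is not available up to [s = t]. *)
Lemma SF_difference_is_RInt a t : t0 <= a < t -> t <= t1 ->
  is_RInt (fun s => SFm (t - s) (g s)) t0 a (SF (t - a) (d a)).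
Proof.
  intros Ha Ht. destruct (ex_RInt_integrand t t0 a) as [I HI]; [lra .. |].
  replace (SF (t - a) (d a)) with I; [exact HI |].
  destruct (difference_mild_formula a) as [w [Hw Ew]]; [lra |].
  apply i2_inj. rewrite SF_S, Ew by lra.
  assert (Hshift : is_RInt (fun s => i2 (SFm (t - s) (g s))) t0 a (S (t - a) w)).
  { eapply is_RInt_ext; [| exact (is_RInt_linear (S (t - a)) _ _ _ _ (S_linear (t - a) ltac:(lra)) Hw)].
    intros s Hs. rewrite Rmin_left, Rmax_right in Hs by lra.
    rewrite SFm_S, <- S_add by lra. f_equal. ring. }
  rewrite <- (is_RInt_unique _ _ _ _ Hshift).
  symmetry. apply is_RInt_unique. exact (is_RInt_linear i2 _ _ _ _ i2_linear HI).
Qed.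

Lemma integrand_bound tau t beta s : t0 <= tau <= s -> s < t -> t <= t1 ->
  (forall s, tau <= s <= t -> norm (d s) <= beta) ->
  norm (SFm (t - s) (g s)) <= L * K * beta * Rpower (t - s) (sigma - 1).
Proof.
  intros Hs Hst Ht Hbound. pose proof (Rpower_pos (t - s) (sigma - 1)).
  eapply Rle_trans; [apply SFm_bound; lra |].
  eapply Rle_trans; [apply Rmult_le_compat_r; [apply norm_ge_0 | apply um_K; lra] |].
  replace (L * K * beta * Rpower (t - s) (sigma - 1))
    with (K * Rpower (t - s) (sigma - 1) * (L * beta)) by ring.
  apply Rmult_le_compat_l; [apply Rmult_le_pos; lra |].
  eapply Rle_trans; [apply g_lipschitz; lra |].
  apply Rmult_le_compat_l; [lra | apply Hbound; lra].
Qed.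

Lemma difference_estimate tau t beta : t0 <= tau < t -> t <= t1 -> 0 <= beta ->
  (forall s, t0 <= s <= tau -> norm (d s) = 0) -> (forall s, tau <= s <= t -> norm (d s) <= beta) ->
  norm (d t) <= L * K / sigma * beta * Rpower (t - tau) sigma.
Proof.
  intros Htau Ht Hbeta Hzero Hbound.
  apply (norm_le_of_orbit_bound SF d tau t); [lra | | |].
  { apply (continuous_minus phi phi'); [apply phi_cont | apply phi'_cont]; lra. }
  { rewrite <- (SF_0 (d t)) at 2. apply SF_cont0. }
  intros a Ha.
  destruct (ex_RInt_integrand t t0 tau) as [I1 HI1]; [lra .. |].
  destruct (ex_RInt_integrand t tau a) as [I2 HI2]; [lra .. |].
  rewrite <- (is_RInt_unique _ _ _ _ (SF_difference_is_RInt a t ltac:(lra) Ht)),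
    (is_RInt_unique _ _ _ _ (is_RInt_Chasles _ _ _ _ _ _ HI1 HI2)).
  assert (HI1_0 : norm I1 <= 0).
  { rewrite <- (Rmult_0_r (tau - t0)).
    apply (norm_RInt_le_const (fun s => SFm (t - s) (g s)) t0 tau); [lra | | exact HI1].
    intros s Hs. eapply Rle_trans; [apply SFm_bound; lra |].
    assert (Hg : norm (g s) <= 0)
      by (rewrite <- (Rmult_0_r L), <- (Hzero s) by lra; apply g_lipschitz; lra).
    pose proof (norm_ge_0 (g s)). replace (norm (g s)) with 0 by lra. lra. }
  assert (HI2_le : norm I2 <= L * K * beta / sigma * (Rpower (t - tau) sigma - Rpower (t - a) sigma)).
  { apply (norm_RInt_le (fun s => SFm (t - s) (g s)) (fun s => L * K * beta * Rpower (t - s) (sigma - 1))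
             tau a I2 _ ltac:(lra)); [| exact HI2 | apply is_RInt_Rpower_sub; lra].
    intros s Hs. apply (integrand_bound tau t beta s); auto; lra. }
  pose proof (norm_triangle I1 I2). pose proof (Rpower_pos (t - a) sigma).
  assert (0 <= L * K * beta / sigma)
    by (apply Rdiv_le_0_compat; [apply Rmult_le_pos; [apply Rmult_le_pos |] |]; lra).
  assert (L * K * beta / sigma * Rpower (t - a) sigma >= 0) by (apply Rle_ge, Rmult_le_pos; lra).
  replace (L * K / sigma * beta) with (L * K * beta / sigma) by (field; lra). nra.
Qed.

Lemma difference_vanishes s : t0 <= s <= t1 -> phi s = phi' s.
Proof.
  assert (Hnorm_cont : forall s, t0 <= s <= t1 -> continuous (fun s => norm (d s)) s).
  { intros r Hr. apply (continuous_norm_comp d).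
    apply (continuous_minus phi phi'); [apply phi_cont | apply phi'_cont]; lra. }
  destruct (continuous_bounded_on_interval _ t0 t1 t0_le_t1 Hnorm_cont) as [B HB].
  intros Hs. apply norm_minus_le_0_eq. apply Req_le.
  apply (singular_gronwall_zero (fun s => norm (d s)) t0 t1 (L * K / sigma) sigma B); auto.
  - apply Rdiv_le_0_compat; [apply Rmult_le_pos |]; lra.
  - intros r Hr. split; [apply norm_ge_0 | apply HB, Hr].
  - unfold d. rewrite difference_at_t0, minus_eq_zero. exact norm_zero.
  - intros tau t beta Htau Ht Hbeta. apply difference_estimate; lra.
Qed.

End VolterraDifference.

(* Solutions are only continuous within [[t0, T)]; freezing them outside [[t0, t1]] makes them
   continuous on all of R, which is what [ex_RInt_continuous] and the closed-graph argument need. *)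
Lemma VP_solution_clamp {F Fm : CompleteNormedModule R_AbsRing} (i2 : F -> Fm) (S : R -> Fm -> Fm)
  (DomP : F -> R -> Prop) (P : F -> R -> Fm) (f0 : F) (t0 t1 : R) (T : Rbar) (phi : R -> F) :
  VP_solution i2 S DomP P f0 t0 T phi -> t0 <= t1 -> Rbar_lt t1 T ->
  (forall x, continuous (fun x => phi (clamp t0 t1 x)) x) /\
  (forall s, t0 <= s <= t1 -> DomP (phi (clamp t0 t1 s)) s) /\
  (forall a, t0 <= a <= t1 -> exists v,
     is_RInt (fun s => S (a - s) (P (phi (clamp t0 t1 s)) s)) t0 a v /\
     i2 (phi (clamp t0 t1 a)) = plus (S (a - t0) (i2 f0)) v).
Proof.
  intros (_ & Hcont & Hdom & Heq) Ht01 HT.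
  assert (HTs : forall s, s <= t1 -> Rbar_lt s T)
    by (intros s Hs; eapply Rbar_le_lt_trans; [| exact HT]; simpl; lra).
  split; [| split].
  - apply (continuous_comp_clamp phi t0 t1 (fun s => t0 <= s /\ Rbar_lt s T) Ht01).
    + intros s Hs. split; [lra | apply HTs; lra].
    + intros s Hs. apply Hcont; [lra | apply HTs; lra].
  - intros s Hs. rewrite clamp_id by lra. apply Hdom; [lra | apply HTs; lra].
  - intros a Ha. destruct (Heq a) as [v [Hv Ev]]; [lra | apply HTs; lra |].
    exists v. rewrite clamp_id by lra. split; [| exact Ev].
    eapply is_RInt_ext; [| exact Hv]. intros s Hs.
    rewrite Rmin_left, Rmax_right in Hs by lra. now rewrite clamp_id by lra.
Qed.

Section GraphPair.

Context {F : NormedModule R_AbsRing}.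
Variables (q q' : R -> F) (t0 t1 : R).
Hypothesis t0_le_t1 : t0 <= t1.
Hypothesis q_cont : forall x, continuous q x.
Hypothesis q'_cont : forall x, continuous q' x.

Definition graph_pair (z : F * R) : Prop :=
  t0 <= snd z <= t1 /\ (fst z = q (snd z) \/ fst z = q' (snd z)).

Lemma graph_pair_closed : closed graph_pair.
Proof.
  assert (Hsnd : forall z : F * R, filterlim snd (locally z) (locally (snd z)))
    by (intros [f t]; apply continuous_snd).
  apply closed_and; [apply closed_and | apply closed_or; apply closed_graph; assumption].
  - apply (closed_comp snd (fun t => t0 <= t)); [exact Hsnd | apply closed_ge].
  - apply (closed_comp snd (fun t => t <= t1)); [exact Hsnd | apply closed_le].
Qed.

Lemma graph_pair_bounded : exists B, forall z, graph_pair z -> norm (fst z) + Rabs (snd z) <= B.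
Proof.
  destruct (continuous_bounded_on_interval (fun s => norm (q s)) t0 t1) as [Bq HBq];
    [exact t0_le_t1 | intros; apply continuous_norm_comp, q_cont |].
  destruct (continuous_bounded_on_interval (fun s => norm (q' s)) t0 t1) as [Bq' HBq'];
    [exact t0_le_t1 | intros; apply continuous_norm_comp, q'_cont |].
  exists (Rmax Bq Bq' + Rabs t0 + Rabs t1). intros [f t] [Ht Hf]. simpl in *.
  assert (norm f <= Rmax Bq Bq').
  { destruct Hf as [-> | ->].
    - eapply Rle_trans; [apply HBq, Ht | apply Rmax_l].
    - eapply Rle_trans; [apply HBq', Ht | apply Rmax_r]. }
  assert (Rabs t <= Rabs t0 + Rabs t1) by (unfold Rabs; repeat destruct Rcase_abs; lra).
  lra.
Qed.

End GraphPair.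

Definition lipschitz_on_closed_bounded {F Fm : NormedModule R_AbsRing}
  (DomP : F -> R -> Prop) (P : F -> R -> Fm) : Prop :=
  forall Cs : F * R -> Prop,
    closed Cs ->
    (exists B : R, forall z, Cs z -> norm (fst z) + Rabs (snd z) <= B) ->
    (forall z, Cs z -> DomP (fst z) (snd z)) ->
    exists L M : R, 0 <= L /\ 0 <= M /\ forall f t f' t', Cs (f, t) -> Cs (f', t') ->
      norm (minus (P f t) (P f' t')) <= L * norm (minus f f') + M * Rabs (t - t').

Lemma P_difference_regular {F Fm : NormedModule R_AbsRing} (DomP : F -> R -> Prop) (P : F -> R -> Fm)
  (q q' : R -> F) (t0 t1 : R) :
  t0 <= t1 -> (forall x, continuous q x) -> (forall x, continuous q' x) ->
  (forall s, t0 <= s <= t1 -> DomP (q s) s /\ DomP (q' s) s) ->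
  lipschitz_on_closed_bounded DomP P ->
  exists L (g : R -> Fm), 0 <= L /\ (forall x, continuous g x) /\
    (forall s, t0 <= s <= t1 -> g s = minus (P (q s) s) (P (q' s) s)) /\
    (forall s, t0 <= s <= t1 -> norm (g s) <= L * norm (minus (q s) (q' s))).
Proof.
  intros Ht01 Hq Hq' Hdom Hlip.
  destruct (Hlip (graph_pair q q' t0 t1)) as (L & M & HL & HM & HLM).
  - apply graph_pair_closed; assumption.
  - apply graph_pair_bounded; assumption.
  - intros [f t] [Ht [-> | ->]]; apply Hdom, Ht.
  - assert (Hbranch_cont : forall r : R -> F, (forall x, continuous r x) ->
              (forall x, graph_pair q q' t0 t1 (r (clamp t0 t1 x), clamp t0 t1 x)) ->
              forall x, continuous (fun x => P (r (clamp t0 t1 x)) (clamp t0 t1 x)) x).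
    { intros r Hr Hgraph x.
      apply (continuous_of_lipschitz_bound _ (fun x => r (clamp t0 t1 x)) (clamp t0 t1) x L M HL HM).
      - intros y. apply HLM; apply Hgraph.
      - apply (continuous_comp (clamp t0 t1) r); [apply continuous_clamp, Ht01 | apply Hr].
      - apply continuous_clamp, Ht01. }
    exists L, (fun x => minus (P (q (clamp t0 t1 x)) (clamp t0 t1 x))
                              (P (q' (clamp t0 t1 x)) (clamp t0 t1 x))).
    split; [exact HL | split; [| split]].
    + intros x. apply (continuous_minus (fun x => P (q (clamp t0 t1 x)) (clamp t0 t1 x))
                                        (fun x => P (q' (clamp t0 t1 x)) (clamp t0 t1 x)));
        apply Hbranch_cont; auto; intros y; (split; [apply clamp_in, Ht01 | simpl; tauto]).
    + intros s Hs. now rewrite clamp_id.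
    + intros s Hs. rewrite clamp_id by exact Hs.
      eapply Rle_trans; [apply HLM; split; simpl; auto |].
      rewrite Rminus_diag, Rabs_R0. lra.
Qed.

Theorem proposition2p5
  (Fp F Fm : CompleteNormedModule R_AbsRing)
  (i1 : Fp -> F) (i2 : F -> Fm) (A : Fp -> Fm) (S : R -> Fm -> Fm)
  (SF : R -> F -> F) (u : R -> R) (SFm : R -> Fm -> F) (um : R -> R) (sigma : R)
  (DomP : F -> R -> Prop) (P : F -> R -> Fm)
  (Hstd : standing_assumptions i1 i2 A S SF u SFm um sigma DomP P)
  (f0 : F) (t0 : R) (Hdom : DomP f0 t0)
  (T T' : Rbar) (phi phi' : R -> F)
  (Hphi : VP_solution i2 S DomP P f0 t0 T phi)
  (Hphi' : VP_solution i2 S DomP P f0 t0 T' phi') :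
  forall t, t0 <= t -> Rbar_lt t (Rbar_min T T') -> phi t = phi' t.
Proof.
  destruct Hstd as (_ & (Hi2lin & Hi2inj & _) & _ & _ & (HSlin & HS0 & HSadd & _) & _
    & HSF & HSFc & _ & _ & HSFm & HSFmc & Hum & HSFmb & [Hsig0 Hsig1] & (C & delta & Hdelta & HumC) & _ & Hlip).
  intros t1 Ht01 Ht1.
  destruct (VP_solution_clamp i2 S DomP P f0 t0 t1 T phi Hphi Ht01) as (Hc & Hd & Hv);
    [eapply Rbar_lt_le_trans; [exact Ht1 | apply Rbar_min_l] |].
  destruct (VP_solution_clamp i2 S DomP P f0 t0 t1 T' phi' Hphi' Ht01) as (Hc' & Hd' & Hv');
    [eapply Rbar_lt_le_trans; [exact Ht1 | apply Rbar_min_r] |].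
  destruct (P_difference_regular DomP P _ _ t0 t1 Ht01 Hc Hc'
              (fun s Hs => conj (Hd s Hs) (Hd' s Hs)) Hlip) as (L & g & HL & Hgc & Hgeq & Hglip).
  destruct (singular_bound_on_interval um sigma C delta (t1 - t0)) as (K & HK & HumK);
    [lra | lra | lra | intros r Hr; apply Hum, Hr | exact HumC |].
  enough (Heq : phi (clamp t0 t1 t1) = phi' (clamp t0 t1 t1)) by (now rewrite clamp_id in Heq by lra).
  apply (difference_vanishes i2 S SF SFm um Hi2lin Hi2inj HSlin HS0 HSadd HSF
           (fun f => HSFc f 0 (Rle_refl 0)) HSFm HSFmc HSFmb sigma K L f0 t0 t1
           (fun x => phi (clamp t0 t1 x)) (fun x => phi' (clamp t0 t1 x))
           (fun s => P (phi (clamp t0 t1 s)) s) (fun s => P (phi' (clamp t0 t1 s)) s) g); auto; lra.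
Qed.
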